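(* Let $n$ be an odd integer greater than $1$. Then \[ \sum_{k=0}^{n-1}[4k+1]\frac{(q;q^2)_k^2}{(q^2;q^2)_k^2} q^{-k} \equiv q[n]^2\pmod{[n]^2\Phi_n(q)}, \] and \[ \sum_{k=0}^{n-1}[4k-1]\frac{(q^{-1};q^2)_k^2}{(q^2;q^2)_k^2} q^{k} \equiv -[n]^2\pmod{[n]^2\Phi_n(q)}. \]
   Context: $q$ is an indeterminate. The $q$-shifted factorial is $(a;q)_k=(1-a)(1-aq)\cdots(1-aq^{k-1})$ (with $(a;q)_0=1$). For any integer $m$ (including negative $m$), the $q$-integer is $[m]=(1-q^m)/(1-q)$; in particular $[-1]=-1/q$. $\Phi_n(q)$ denotes the $n$-th cyclotomic polynomial. A congruence $A(q)\equiv B(q)\pmod{P(q)}$ between rational functions in $q$ whose denominators are coprime to the polynomial $P(q)$ means that $P(q)$ divides the numerator of $A(q)-B(q)$ (written in lowest terms) in $\mathbb{Z}[q]$. *)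

From HB Require Import structures.
From mathcomp Require Import all_boot all_order all_algebra all_field.
Set Implicit Arguments. Unset Strict Implicit. Unset Printing Implicit Defensive.
Import Order.TTheory GRing.Theory Num.Theory.
Local Open Scope ring_scope.

From mathcomp Require Import fraction.
Definition RF := {fraction {poly rat}}.
Notation tof := (@FracField.tofrac _).
Notation "x %:F" := (tof x) : ring_scope.

Definition qq : RF := ('X : {poly rat})%:F.

Definition qpoch (a b : RF) (k : nat) : RF := \prod_(i < k) (1 - a * b ^+ i).

Definition qint (m : int) : RF := (1 - qq ^ m) / (1 - qq).

Definition qintp (n : nat) : {poly rat} := \sum_(i < n) 'X^i.

Definition Phi (n : nat) : {poly rat} := map_poly (intr : int -> rat) 'Phi_n.

Definition qcong (A B : RF) (P : {poly rat}) : Prop :=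
  exists N D : {poly rat}, [/\ D != 0, coprimep D P, P %| N & A - B = N%:F / D%:F].

From HB Require Import structures.
From mathcomp Require Import all_boot all_order all_algebra all_field.
From mathcomp Require Import ring zify.
Import Order.TTheory GRing.Theory Num.Theory.
Local Open Scope ring_scope.

(* Both sums telescope:
     sum_(k <= m) [4k+1] (q;q^2)_k^2 / (q^2;q^2)_k^2 q^-k
       = q^-m [2m+2]^2 (q;q^2)_(m+1)^2 / (q^2;q^2)_(m+1)^2,
     sum_(k <= m) [4k-1] (q^-1;q^2)_k^2 / (q^2;q^2)_k^2 q^k
       = - q^(m-1) (q;q^2)_m^2 / (q^2;q^2)_m^2.
   Let n = m + 1 be odd, B = [2n choose n] and E = (-q;q)_m (-q;q)_n.  The
   identity B (q^2;q^2)_n = (q;q^2)_n (-q;q)_n^2 gives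
     (q;q^2)_n [2n] / (q^2;q^2)_n = [n] B / E = (q;q^2)_m [2n-1] / (q^2;q^2)_m,
   so the two differences are
     [n]^2 (B^2 - q^n E^2) / (q^m E^2)  and
     [n]^2 (q E^2 [2n-1]^2 - q^m B^2) / (q E^2 [2n-1]^2).
   As n is odd, the denominators do not vanish at n-th roots of unity.  At a
   primitive n-th root of unity z we have z [2n-1](z) = -1 and B(z) = E(z):
   in B (q^2;q^2)_m = E prod_(i < n, 2i+1 <> n) (1 - q^(2i+1)) both products
   evaluate to prod_(0 < r < n) (1 - z^r) <> 0, because j |-> 2j and
   j |-> 2j+1 permute Z/nZ.  Hence Phi_n divides both numerators. *)

Section QFactorials.
Context {R : comNzRingType}.

Definition qfac k : {poly R} := \prod_(i < k) (1 - 'X^(i.+1)).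
Definition qfacN k : {poly R} := \prod_(i < k) (1 + 'X^(i.+1)).
Definition qfac_odd k : {poly R} := \prod_(i < k) (1 - 'X^((2 * i).+1)).
Definition qfac_even k : {poly R} := \prod_(i < k) (1 - 'X^((2 * i).+2)).
Definition qfacN_pair m : {poly R} := qfacN m * qfacN m.+1.
Definition qfac_odd_but n h : {poly R} :=
  \prod_(i < n | i != h :> nat) (1 - 'X^((2 * i).+1)).

Fixpoint qbinom N k : {poly R} :=
  match N, k with
  | _, 0 => 1
  | 0, _.+1 => 0
  | N'.+1, k'.+1 => qbinom N' k' + 'X^(k'.+1) * qbinom N' k'.+1
  end.

Lemma qfacS k : qfac k.+1 = qfac k * (1 - 'X^(k.+1)).
Proof. exact: big_ord_recr. Qed.

Lemma qfacNS k : qfacN k.+1 = qfacN k * (1 + 'X^(k.+1)).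
Proof. exact: big_ord_recr. Qed.

Lemma qfac_oddS k : qfac_odd k.+1 = qfac_odd k * (1 - 'X^((2 * k).+1)).
Proof. exact: big_ord_recr. Qed.

Lemma qfac_evenS k : qfac_even k.+1 = qfac_even k * (1 - 'X^((2 * k).+2)).
Proof. exact: big_ord_recr. Qed.

Lemma qfac_odd_split n h :
  (h < n)%N -> qfac_odd n = (1 - 'X^((2 * h).+1)) * qfac_odd_but n h.
Proof. by move=> lt_hn; rewrite /qfac_odd (bigD1 (Ordinal lt_hn)). Qed.

Lemma qbinom_small N k : (N < k)%N -> qbinom N k = 0.
Proof.
elim: N k => [|N IHN] [|k] //= ltNk.
by rewrite !IHN ?mulr0 ?addr0 // ltnW.
Qed.

Lemma qbinom_qfac N k : (k <= N)%N -> qbinom N k * qfac k * qfac (N - k) = qfac N.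
Proof.
elim: N k => [|N IHN] [|k] //= le_kN; rewrite ?subn0 ?[qfac 0]big_ord0 ?mul1r //.
have [eq_kN|ne_kN] := eqVneq k N.
  have := IHN N (leqnn N); rewrite subnn eq_kN (qbinom_small _ _ (ltnSn N)) mulr0 addr0.
  by rewrite subnn qfacS => IH_N; rewrite mulrA mulrAC IH_N.
have lt_kN : (k < N)%N by rewrite ltn_neqAle ne_kN.
have IH_k := IHN k (ltnW lt_kN); have IH_Sk := IHN k.+1 lt_kN.
rewrite -(subnSK lt_kN) qfacS in IH_k; rewrite qfacS in IH_Sk.
have XD : 'X^(k.+1) * 'X^((N - k.+1).+1) = 'X^(N.+1) :> {poly R}.
  by rewrite -exprD addnS subnKC.
rewrite subSS -(subnSK lt_kN) !qfacS -XD.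
(* Pascal: 1 - q^(N+1) = (1 - q^(k+1)) + q^(k+1) (1 - q^(N-k)). *)
transitivity
  (qbinom N k * qfac k * (qfac (N - k.+1) * (1 - 'X^((N - k.+1).+1))) * (1 - 'X^(k.+1))
   + qbinom N k.+1 * (qfac k * (1 - 'X^(k.+1))) * qfac (N - k.+1)
     * ('X^(k.+1) * (1 - 'X^((N - k.+1).+1)))).
  ring.
by rewrite IH_k IH_Sk; ring.
Qed.

Lemma qfac_evenE k : qfac_even k = qfac k * qfacN k.
Proof.
elim: k => [|k IHk]; first by rewrite /qfac_even /qfac /qfacN !big_ord0 mulr1.
have sq : 'X^((2 * k).+2) = 'X^(k.+1) ^+ 2 :> {poly R}.
  by rewrite -exprM (mulnC k.+1) mulnS add2n.
by rewrite qfac_evenS sq qfacS qfacNS IHk; ring.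
Qed.

Lemma qfac_double k : qfac_odd k * qfac_even k = qfac (2 * k).
Proof.
elim: k => [|k IHk]; first by rewrite /qfac_even /qfac /qfac_odd !big_ord0 mulr1.
by rewrite qfac_oddS qfac_evenS mulnS !qfacS -IHk; ring.
Qed.

Lemma horner0_eq1_neq0 [p : {poly R}] : p.[0] = 1 -> p != 0.
Proof. by apply: contra_eq_neq => ->; rewrite horner0 eq_sym oner_neq0. Qed.

Lemma horner0_1subXn k : (1 - 'X^(k.+1) : {poly R}).[0] = 1.
Proof. by rewrite !hornerE expr0n subr0. Qed.

Lemma horner0_1addXn k : (1 + 'X^(k.+1) : {poly R}).[0] = 1.
Proof. by rewrite !hornerE expr0n addr0. Qed.

Lemma qfac_neq0 k : qfac k != 0.
Proof.
by apply: horner0_eq1_neq0; rewrite horner_prod big1 // => i _; apply: horner0_1subXn.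
Qed.

Lemma qfac_even_neq0 k : qfac_even k != 0.
Proof.
by apply: horner0_eq1_neq0; rewrite horner_prod big1 // => i _; apply: horner0_1subXn.
Qed.

Lemma qfacN_pair_neq0 m : qfacN_pair m != 0.
Proof.
apply: horner0_eq1_neq0; rewrite hornerM !horner_prod !big1 ?mulr1 // => i _.
all: exact: horner0_1addXn.
Qed.

End QFactorials.

Section CentralQBinomial.
Context {R : idomainType}.

Lemma qbinom_central k :
  qbinom (2 * k) k * qfac_even k = qfac_odd k * qfacN k ^+ 2 :> {poly R}.
Proof.
apply: (mulIf (expf_neq0 2 (qfac_neq0 k))).
have := @qbinom_qfac R _ _ (leq_pmull k (isT : (0 < 2)%N)).
have -> : (2 * k - k = k)%N by rewrite mul2n -addnn addnK.
rewrite -qfac_double !qfac_evenE => qbinom_qfac_k.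
transitivity (qbinom (2 * k) k * qfac k * qfac k * (qfac k * qfacN k) : {poly R}).
  ring.
by rewrite qbinom_qfac_k; ring.
Qed.

Lemma qbinom_central_succ m :
  qbinom (2 * m.+1) m.+1 * qfac_even m.+1
  = qfac_odd m.+1 * (1 + 'X^(m.+1)) * qfacN_pair m :> {poly R}.
Proof. by rewrite qbinom_central /qfacN_pair qfacNS; ring. Qed.

Lemma qbinom_central_pred m :
  qbinom (2 * m.+1) m.+1 * qfac_even m * (1 - 'X^(m.+1))
  = qfac_odd m * (1 - 'X^((2 * m).+1)) * qfacN_pair m :> {poly R}.
Proof.
apply: (mulIf (horner0_eq1_neq0 (horner0_1addXn m))).
have sq : 'X^((2 * m).+2) = 'X^(m.+1) ^+ 2 :> {poly R}.
  by rewrite -exprM (mulnC m.+1) mulnS add2n.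
transitivity (qbinom (2 * m.+1) m.+1 * qfac_even m.+1 : {poly R}).
  by rewrite qfac_evenS sq; ring.
by rewrite qbinom_central_succ qfac_oddS; ring.
Qed.

Lemma qbinom_central_odd h :
  qbinom (2 * (2 * h).+1) (2 * h).+1 * qfac_even (2 * h)
  = qfac_odd_but (2 * h).+1 h * qfacN_pair (2 * h) :> {poly R}.
Proof.
apply: (mulIf (horner0_eq1_neq0 (horner0_1subXn (2 * h)))).
have lt_hn : (h < (2 * h).+1)%N by rewrite ltnS leq_pmull.
by rewrite qbinom_central_pred -qfac_oddS (qfac_odd_split _ _ lt_hn); ring.
Qed.

End CentralQBinomial.

Lemma qintp_mul k : qintp k * (1 - 'X) = 1 - 'X^k.
Proof. by rewrite -[1 - 'X^k]opprB subrX1 -mulNr opprB mulrC. Qed.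

Lemma qintp_double k : qintp (2 * k) = qintp k * (1 + 'X^k).
Proof.
rewrite /qintp mul2n -addnn big_split_ord mulrDr mulr1 mulr_suml; congr (_ + _).
by apply: eq_bigr => i _; rewrite exprD mulrC.
Qed.

Lemma qintp_neq0 k : qintp k.+1 != 0.
Proof.
have := horner0_eq1_neq0 (@horner0_1subXn rat k).
by rewrite -qintp_mul mulf_eq0 negb_or => /andP[].
Qed.

Lemma qbinom_central_succ_qintp m :
  qbinom (2 * m.+1) m.+1 * qfac_even m.+1 * qintp m.+1
  = qfac_odd m.+1 * qintp (2 * m.+1) * qfacN_pair m.
Proof. by rewrite qbinom_central_succ qintp_double; ring. Qed.

Lemma qbinom_central_pred_qintp m :
  qbinom (2 * m.+1) m.+1 * qfac_even m * qintp m.+1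
  = qfac_odd m * qintp (2 * m).+1 * qfacN_pair m.
Proof.
have X1_neq0 : 1 - 'X != 0 :> {poly rat}.
  by rewrite -['X]expr1 horner0_eq1_neq0 ?horner0_1subXn.
apply: (mulIf X1_neq0).
transitivity (qbinom (2 * m.+1) m.+1 * qfac_even m * (qintp m.+1 * (1 - 'X))); first ring.
by rewrite qintp_mul qbinom_central_pred -qintp_mul; ring.
Qed.

Lemma qq_neq0 : qq != 0.
Proof. by rewrite tofrac_eq0 polyX_eq0. Qed.

Lemma tof_1subXn k : tof (1 - 'X^k) = 1 - qq ^+ k.
Proof. by rewrite tofracB tofrac1 tofracXn. Qed.

Lemma one_sub_qq_neq0 k : 1 - qq ^+ k.+1 != 0.
Proof. by rewrite -tof_1subXn tofrac_eq0 horner0_eq1_neq0 ?horner0_1subXn. Qed.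

Lemma one_sub_q_neq0 : 1 - qq != 0.
Proof. by rewrite -[qq]expr1 one_sub_qq_neq0. Qed.

Lemma qintE (k : nat) : qint k = (1 - qq ^+ k) / (1 - qq).
Proof. by rewrite /qint -exprnP. Qed.

Lemma qint_nat (k : nat) : qint k = tof (qintp k).
Proof.
apply: (mulIf one_sub_q_neq0); rewrite qintE (divfK one_sub_q_neq0) -tof_1subXn -qintp_mul tofracM.
by rewrite tofracB tofrac1.
Qed.

Lemma qpoch0 a b : qpoch a b 0 = 1.
Proof. exact: big_ord0. Qed.

Lemma qpochS a b k : qpoch a b k.+1 = qpoch a b k * (1 - a * b ^+ k).
Proof. exact: big_ord_recr. Qed.

Lemma qpoch_q_q2 k : qpoch qq (qq ^+ 2) k = tof (qfac_odd k).
Proof.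
rewrite /qpoch (big_morph _ (@tofracM _) (@tofrac1 _)); apply: eq_bigr => i _.
by rewrite tof_1subXn -exprM -exprS.
Qed.

Lemma qpoch_q2_q2 k : qpoch (qq ^+ 2) (qq ^+ 2) k = tof (qfac_even k).
Proof.
rewrite /qpoch (big_morph _ (@tofracM _) (@tofrac1 _)); apply: eq_bigr => i _.
by rewrite tof_1subXn -exprM -exprD add2n.
Qed.

Lemma qpoch_q2_q2_neq0 k : qpoch (qq ^+ 2) (qq ^+ 2) k != 0.
Proof. by rewrite qpoch_q2_q2 tofrac_eq0 qfac_even_neq0. Qed.

Lemma qpoch_qinv_q2 k : qpoch qq^-1 (qq ^+ 2) k.+1 = (1 - qq^-1) * qpoch qq (qq ^+ 2) k.
Proof.
rewrite /qpoch big_ord_recl expr0 mulr1; congr (_ * _); apply: eq_bigr => i _.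
by rewrite lift0 exprS mulrA expr2 mulKf // qq_neq0.
Qed.

Lemma telescope_plus_base (F : fieldType) (q : F) : 1 - q != 0 -> 1 - q ^+ 2 != 0 ->
  (1 - q) / (1 - q) = ((1 - q) / (1 - q ^+ 2) * ((1 - q ^+ 2) / (1 - q))) ^+ 2.
Proof. by move=> q1 q2; field; rewrite q1 q2. Qed.

Lemma telescope_plus_step (F : fieldType) (q x y a b : F) :
  q != 0 -> y != 0 -> 1 - q != 0 -> b != 0 -> 1 - q ^+ 2 * x != 0 ->
  (a / b * ((1 - x) / (1 - q))) ^+ 2 / y
    + (1 - q * x ^+ 2) / (1 - q) * (a ^+ 2 / b ^+ 2) / (q * y)
  = (a * (1 - q * x) / (b * (1 - q ^+ 2 * x)) * ((1 - q ^+ 2 * x) / (1 - q))) ^+ 2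
    / (q * y).
Proof. by move=> q0 y0 q1 b0 x0; field; rewrite q0 y0 q1 b0 x0. Qed.

Lemma telescope_minus_base (F : fieldType) (q : F) :
  q != 0 -> 1 - q != 0 -> (1 - q^-1) / (1 - q) = - q^-1.
Proof. by move=> q0 q1; field; rewrite q0 q1. Qed.

Lemma telescope_minus_step (F : fieldType) (q w y a b : F) :
  q != 0 -> 1 - q != 0 -> b != 0 -> 1 - q ^+ 2 * w != 0 ->
  - (a / b) ^+ 2 * y / q
    + (1 - q ^+ 3 * w ^+ 2) / (1 - q)
      * (((1 - q^-1) * a) ^+ 2 / (b * (1 - q ^+ 2 * w)) ^+ 2) * (q * y)
  = - (a * (1 - q * w) / (b * (1 - q ^+ 2 * w))) ^+ 2 * (q * y) / q.
Proof. by move=> q0 q1 b0 w0; field; rewrite q0 q1 b0 w0. Qed.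

Lemma sum_plus_closed m :
  \sum_(k < m.+1) qint (4 * k + 1)%N
      * (qpoch qq (qq ^+ 2) k ^+ 2 / qpoch (qq ^+ 2) (qq ^+ 2) k ^+ 2) * qq ^ (- (k : int))
  = (qpoch qq (qq ^+ 2) m.+1 / qpoch (qq ^+ 2) (qq ^+ 2) m.+1 * qint (2 * m.+1)%N) ^+ 2
    / qq ^+ m.
Proof.
elim: m => [|m IHm].
  rewrite big_ord1 /= !qpochS !qpoch0 !qintE oppr0 expr0z !expr0 !mulr1 !mul1r.
  rewrite muln0 muln1 expr1 expr1n !divr1 mulr1.
  exact: telescope_plus_base one_sub_q_neq0 (one_sub_qq_neq0 1).
rewrite big_ord_recr IHm /= !(qpochS _ _ m.+1) !qintE -exprnN.
set x := (qq ^+ 2) ^+ m.+1.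
have -> : qq ^+ (2 * m.+1) = x by rewrite /x exprM.
have -> : qq ^+ (4 * m.+1 + 1) = qq * x ^+ 2.
  by rewrite /x -!exprM -exprS; congr (_ ^+ _); lia.
have -> : qq ^+ (2 * m.+2) = qq ^+ 2 * x.
  by rewrite /x -exprM -exprD; congr (_ ^+ _); lia.
rewrite [qq ^+ m.+1]exprS.
apply: telescope_plus_step.
- exact: qq_neq0.
- exact: expf_neq0 qq_neq0.
- exact: one_sub_q_neq0.
- exact: qpoch_q2_q2_neq0.
- by rewrite /x -exprS -exprM mulnS add2n one_sub_qq_neq0.
Qed.

Lemma sum_minus_closed m :
  \sum_(k < m.+1) qint (4 * (k : int) - 1)
      * (qpoch qq^-1 (qq ^+ 2) k ^+ 2 / qpoch (qq ^+ 2) (qq ^+ 2) k ^+ 2) * qq ^+ k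
  = - (qpoch qq (qq ^+ 2) m / qpoch (qq ^+ 2) (qq ^+ 2) m) ^+ 2 * qq ^+ m / qq.
Proof.
elim: m => [|m IHm].
  rewrite big_ord1 /= !qpoch0 !expr0 /qint mulr0 sub0r exprN1.
  rewrite !expr1n !divr1 !mulr1 expr1n mulN1r.
  exact: telescope_minus_base qq_neq0 one_sub_q_neq0.
rewrite big_ord_recr IHm /= qpoch_qinv_q2 !(qpochS _ _ m).
have -> : 4 * (m.+1 : int) - 1 = (4 * m + 3)%N by lia.
rewrite qintE.
set w := (qq ^+ 2) ^+ m.
have -> : qq ^+ (4 * m + 3) = qq ^+ 3 * w ^+ 2.
  by rewrite /w -!exprM -exprD; congr (_ ^+ _); lia.
rewrite [qq ^+ m.+1]exprS.
apply: telescope_minus_step.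
- exact: qq_neq0.
- exact: one_sub_q_neq0.
- exact: qpoch_q2_q2_neq0.
- by rewrite /w -exprM -exprD add2n one_sub_qq_neq0.
Qed.

Lemma closed_plus_diff (F : fieldType) (q y a b c p s t : F) :
  q != 0 -> y != 0 -> b != 0 -> p != 0 -> c * b * t = a * s * p ->
  (a / b * s) ^+ 2 / y - q * t ^+ 2 = t ^+ 2 * (c ^+ 2 - q * y * p ^+ 2) / (y * p ^+ 2).
Proof.
move=> q0 y0 b0 p0 cbt_asp.
have -> : a / b * s = c * t / p.
  by apply/eqP; rewrite mulrAC eqr_div // -cbt_asp; apply/eqP; ring.
by field; rewrite y0 p0.
Qed.

Lemma closed_minus_diff (F : fieldType) (q y a b c p s t : F) :
  q != 0 -> b != 0 -> p != 0 -> s != 0 -> c * b * t = a * s * p ->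
  - (a / b) ^+ 2 * y / q + t ^+ 2
  = t ^+ 2 * (q * p ^+ 2 * s ^+ 2 - y * c ^+ 2) / (q * p ^+ 2 * s ^+ 2).
Proof.
move=> q0 b0 p0 s0 cbt_asp.
have -> : a / b = c * t / (s * p).
  by apply/eqP; rewrite eqr_div ?mulf_neq0 // mulrA -cbt_asp; apply/eqP; ring.
by field; rewrite q0 p0 s0.
Qed.

Lemma closed_plus_subE m :
  (qpoch qq (qq ^+ 2) m.+1 / qpoch (qq ^+ 2) (qq ^+ 2) m.+1 * qint (2 * m.+1)%N) ^+ 2
    / qq ^+ m - qq * qint m.+1 ^+ 2
  = tof (qintp m.+1 ^+ 2 * (qbinom (2 * m.+1) m.+1 ^+ 2 - 'X^(m.+1) * qfacN_pair m ^+ 2))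
    / tof ('X^m * qfacN_pair m ^+ 2).
Proof.
rewrite qpoch_q_q2 qpoch_q2_q2 !qint_nat ['X^(m.+1)]exprS.
have := @qfac_even_neq0 rat m.+1; have := @qfacN_pair_neq0 rat m.
move: (qbinom_central_succ_qintp m).
(* Opaque variables keep the tofrac rewrites below from unfolding the products. *)
move: (qbinom _ _) (qfac_odd _) (qfac_even _) (qfacN_pair _) (qintp m.+1) (qintp (2 * m.+1)).
move=> c a b p t s /(congr1 tof) cbt_asp p0 b0.
rewrite !tofracM in cbt_asp; rewrite !(tofracXn, tofracM, tofracB).
apply: closed_plus_diff cbt_asp; [exact: qq_neq0 | exact: expf_neq0 qq_neq0 | ..].
all: by rewrite tofrac_eq0.
Qed.

Lemma closed_minus_addE m :
  - (qpoch qq (qq ^+ 2) m / qpoch (qq ^+ 2) (qq ^+ 2) m) ^+ 2 * qq ^+ m / qq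
    - - qint m.+1 ^+ 2
  = tof (qintp m.+1 ^+ 2 * ('X * qfacN_pair m ^+ 2 * qintp (2 * m).+1 ^+ 2
                           - 'X^m * qbinom (2 * m.+1) m.+1 ^+ 2))
    / tof ('X * qfacN_pair m ^+ 2 * qintp (2 * m).+1 ^+ 2).
Proof.
rewrite opprK qpoch_q_q2 qpoch_q2_q2 !qint_nat.
have := @qfac_even_neq0 rat m; have := @qfacN_pair_neq0 rat m; have := qintp_neq0 (2 * m).
move: (qbinom_central_pred_qintp m).
move: (qbinom _ _) (qfac_odd _) (qfac_even _) (qfacN_pair _) (qintp m.+1) (qintp (2 * m).+1).
move=> c a b p t s /(congr1 tof) cbt_asp s0 p0 b0.
rewrite !tofracM in cbt_asp; rewrite !(tofracXn, tofracM, tofracB).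
apply: closed_minus_diff cbt_asp; [exact: qq_neq0 | ..].
all: by rewrite tofrac_eq0.
Qed.

Lemma inZp_affine_inj n c a : coprime c n.+1 ->
  injective (fun j : 'I_n.+1 => inZp (c * j + a) : 'I_n.+1).
Proof.
move=> co_cn i j /(congr1 val) /= /eqP; rewrite eqn_modDr => eq_ij.
apply: val_inj => /=.
wlog le_ji : i j eq_ij / (j <= i)%N.
  by move=> wlog_ij; case: (leqP j i) => [|/ltnW] /wlog_ij ->; rewrite // eq_sym.
rewrite -(modn_small (ltn_ord i)) -(modn_small (ltn_ord j)); apply/eqP.
rewrite eqn_mod_dvd // -(Gauss_dvdr _ (etrans (coprime_sym _ _) co_cn)).
by rewrite mulnBr -eqn_mod_dvd ?leq_mul2l ?le_ji ?orbT.
Qed.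

Section RootOfUnityProducts.
Variables (R : comNzRingType) (h : nat) (z : R).
Hypothesis zn : z ^+ (2 * h).+1 = 1.

Let coprime_2_odd : coprime 2 (2 * h).+1.
Proof. by rewrite coprime2n /= mul2n odd_double. Qed.

Lemma prod_even_powers_root1 :
  \prod_(i < 2 * h) (1 - z ^+ (2 * i).+2)
  = \prod_(r < (2 * h).+1 | (r != 0 :> nat)%N) (1 - z ^+ r).
Proof.
have double_inj := inZp_affine_inj _ _ 0 coprime_2_odd.
rewrite (reindex_inj double_inj) /=.
rewrite (eq_bigl (fun j : 'I_(2 * h).+1 => (j != 0 :> nat)%N)) => [|j]; last first.
  by have := inj_eq double_inj j ord0; rewrite -!val_eqE /= muln0 addn0 mod0n => ->.
rewrite [RHS]big_mkcond big_ord_recl /= mul1r.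
by apply: eq_bigr => i _; rewrite expr_mod // /bump /= addn0 mulnS add2n.
Qed.

Lemma prod_odd_powers_but_root1 :
  \prod_(i < (2 * h).+1 | i != h :> nat) (1 - z ^+ (2 * i).+1)
  = \prod_(r < (2 * h).+1 | (r != 0 :> nat)%N) (1 - z ^+ r).
Proof.
have double_succ_inj := inZp_affine_inj _ _ 1 coprime_2_odd.
rewrite [RHS](reindex_inj double_succ_inj) /=.
apply: eq_big => [j|j _]; last by rewrite expr_mod // addn1.
have lt_hn : (h < (2 * h).+1)%N by rewrite ltnS leq_pmull.
have := inj_eq double_succ_inj j (Ordinal lt_hn).
by rewrite -!val_eqE /= !addn1 modnn => ->.
Qed.

End RootOfUnityProducts.

Lemma prod_1subX_prim_neq0 [R : idomainType] [n] [z : R] : n.-primitive_root z ->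
  \prod_(r < n | (r != 0 :> nat)%N) (1 - z ^+ r) != 0.
Proof.
move=> prim_z; rewrite prodf_seq_neq0; apply/allP => r _; apply/implyP => r_neq0.
rewrite subr_eq0 eq_sym -(prim_order_dvd prim_z); apply: contra r_neq0 => /dvdn_leq.
by rewrite lt0n leqNgt ltn_ord => r_gt0; apply/negPn/negP => /r_gt0.
Qed.

Lemma addr1_expr_neq0 [R : numDomainType] [x : R] [n] k :
  odd n -> x ^+ n = 1 -> 1 + x ^+ k != 0.
Proof.
move=> odd_n xn; apply/negP => /eqP sum0.
have xk : x ^+ k = -1 by apply/eqP; rewrite -addr_eq0 addrC sum0.
have := congr1 (fun y => y ^+ k) xn.
rewrite /= expr1n -exprM mulnC exprM xk -signr_odd odd_n expr1 => /eqP.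
by rewrite eqNr oner_eq0.
Qed.

Lemma sum_expr_double_root1 [R : idomainType] [x : R] [m] :
  x ^+ m.+1 = 1 -> x != 1 -> (\sum_(i < (2 * m).+1) x ^+ i) * x = -1.
Proof.
move=> xm x_neq1; apply/eqP; rewrite -addr_eq0.
have x2m2 : x ^+ (2 * m).+1 * x = 1.
  by rewrite -exprSr -add2n -mulnS mulnC exprM xm expr1n.
have : (x - 1) * ((\sum_(i < (2 * m).+1) x ^+ i) * x + 1) = 0.
  by rewrite mulrDr mulr1 mulrA -subrX1 mulrBl x2m2; ring.
by move/eqP; rewrite mulf_eq0 subr_eq0 (negPf x_neq1).
Qed.

Lemma sum_expr_double_root1_neq0 [R : numDomainType] [x : R] [m] :
  x ^+ m.+1 = 1 -> \sum_(i < (2 * m).+1) x ^+ i != 0.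
Proof.
move=> xm; have [->|x_neq1] := eqVneq x 1.
  by under eq_bigr do rewrite expr1n; rewrite sumr_const card_ord pnatr_eq0.
move: (sum_expr_double_root1 xm x_neq1); apply: contra_eq_neq => ->.
by rewrite mul0r eq_sym oppr_eq0 oner_eq0.
Qed.

Definition evC (z : algC) : {rmorphism {poly rat} -> algC} :=
  horner_morph (fun a : rat => mulrC z (ratr a)).

Lemma evCX z : evC z 'X = z.
Proof. exact: horner_morphX. Qed.

Lemma evC_1subXn z k : evC z (1 - 'X^k) = 1 - z ^+ k.
Proof. by rewrite rmorphB rmorph1 rmorphXn evCX. Qed.

Lemma evC_1addXn z k : evC z (1 + 'X^k) = 1 + z ^+ k.
Proof. by rewrite rmorphD rmorph1 rmorphXn evCX. Qed.

Lemma evC_qintp z k : evC z (qintp k) = \sum_(i < k) z ^+ i.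
Proof. by rewrite rmorph_sum; apply: eq_bigr => i _; rewrite rmorphXn evCX. Qed.

Lemma evC_qfac_even h z : z ^+ (2 * h).+1 = 1 ->
  evC z (qfac_even (2 * h)) = \prod_(r < (2 * h).+1 | (r != 0 :> nat)%N) (1 - z ^+ r).
Proof.
move=> zn; rewrite rmorph_prod -prod_even_powers_root1 //.
by apply: eq_bigr => i _; rewrite evC_1subXn.
Qed.

Lemma evC_qfac_odd_but h z : z ^+ (2 * h).+1 = 1 ->
  evC z (qfac_odd_but (2 * h).+1 h)
  = \prod_(r < (2 * h).+1 | (r != 0 :> nat)%N) (1 - z ^+ r).
Proof.
move=> zn; rewrite rmorph_prod -prod_odd_powers_but_root1 //.
by apply: eq_bigr => i _; rewrite evC_1subXn.
Qed.

Lemma evC_qbinom_central h z : ((2 * h).+1).-primitive_root z ->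
  evC z (qbinom (2 * (2 * h).+1) (2 * h).+1) = evC z (qfacN_pair (2 * h)).
Proof.
move=> prim_z; have zn := prim_expr_order prim_z.
have := congr1 (evC z) (qbinom_central_odd h).
rewrite 2!rmorphM evC_qfac_even // evC_qfac_odd_but // [RHS]mulrC.
exact: (mulIf (prod_1subX_prim_neq0 prim_z)).
Qed.

Lemma evC_qfacN_pair_neq0 [n] m [z : algC] :
  odd n -> z ^+ n = 1 -> evC z (qfacN_pair m) != 0.
Proof.
move=> odd_n zn; have qfacN_neq0 k : evC z (qfacN k) != 0.
  rewrite rmorph_prod prodf_seq_neq0; apply/allP => i _.
  by rewrite evC_1addXn (addr1_expr_neq0 _ odd_n zn).
by rewrite rmorphM mulf_neq0.
Qed.

Lemma map_Phi n : map_poly ratr (Phi n) = map_poly intr 'Phi_n :> {poly algC}.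
Proof.
by rewrite /Phi -map_poly_comp; apply: eq_map_poly => a /=; rewrite rmorph_int.
Qed.

Lemma Phi_dvdp_evC [n] [z : algC] [M : {poly rat}] :
  n.-primitive_root z -> evC z M = 0 -> Phi n %| M.
Proof.
move=> prim_z Mz0; have [p [map_p _] root_dvd] := minCpolyP z.
have map_Phi_p : map_poly ratr (Phi n) = map_poly ratr p :> {poly algC}.
  by rewrite -map_p (minCpoly_cyclotomic prim_z) -(Cintr_Cyclotomic prim_z) map_Phi.
by rewrite (map_inj_poly (fmorph_inj _) _ map_Phi_p) ?rmorph0 // -root_dvd; apply/eqP.
Qed.

Lemma evC_Phi_prim n (x : algC) : (0 < n)%N -> evC x (Phi n) = 0 -> n.-primitive_root x.
Proof.
move=> n_gt0 Phix0; have [z prim_z] := C_prim_root_exists n_gt0.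
by rewrite -(root_cyclotomic prim_z) -(Cintr_Cyclotomic prim_z) -map_Phi; apply/eqP.
Qed.

Lemma evC_modulus_root [n] [x : algC] : (0 < n)%N ->
  evC x (qintp n ^+ 2 * Phi n) = 0 -> x ^+ n = 1.
Proof.
move=> n_gt0 /eqP; rewrite rmorphM rmorphXn mulf_eq0 expf_eq0.
case/orP => [/andP[_ /eqP qintx0]|/eqP Phix0].
  by apply/eqP; rewrite -subr_eq0 subrX1 -evC_qintp qintx0 mulr0.
exact/prim_expr_order/evC_Phi_prim.
Qed.

Lemma coprimep_evC (D P : {poly rat}) :
  (forall x : algC, evC x P = 0 -> evC x D != 0) -> coprimep D P.
Proof.
move=> PD; rewrite -(coprimep_map (ratr : {rmorphism rat -> algC})) coprimep_sym.
by apply: Pdiv.ClosedField.root_coprimep => x /eqP /PD.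
Qed.

Lemma qcong_frac (A B : RF) (M N D P : {poly rat}) :
  D != 0 -> coprimep D (M * P) -> P %| N -> A - B = tof (M * N) / tof D ->
  qcong A B (M * P).
Proof. by move=> D0 coDP dvdPN AB; exists (M * N), D; rewrite dvdp_mul ?dvdpp. Qed.

Section OddModulus.
Variable h : nat.
Local Notation n := (2 * h).+1.

Let odd_n : odd n. Proof. by rewrite /= mul2n odd_double. Qed.

Let root1_neq0 (x : algC) : x ^+ n = 1 -> x != 0.
Proof. by apply: contra_eq_neq => ->; rewrite exprS mul0r eq_sym oner_eq0. Qed.

Lemma Phi_dvdp_num_plus : Phi n %| qbinom (2 * n) n ^+ 2 - 'X^n * qfacN_pair (2 * h) ^+ 2.
Proof.
have [z prim_z] := C_prim_root_exists (ltn0Sn (2 * h)).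
apply: (Phi_dvdp_evC prim_z).
rewrite rmorphB rmorphXn rmorphM !rmorphXn evCX (prim_expr_order prim_z) mul1r.
by rewrite evC_qbinom_central ?subrr.
Qed.

Lemma Phi_dvdp_num_minus : (0 < h)%N ->
  Phi n %| 'X * qfacN_pair (2 * h) ^+ 2 * qintp (2 * (2 * h)).+1 ^+ 2
           - 'X^(2 * h) * qbinom (2 * n) n ^+ 2.
Proof.
move=> h_gt0; have [z prim_z] := C_prim_root_exists (ltn0Sn (2 * h)).
have zn := prim_expr_order prim_z.
have z_neq1 : z != 1.
  by rewrite -[z]expr1 -(prim_order_dvd prim_z) dvdn1 gtn_eqF // ltnS muln_gt0.
have zW : z * evC z (qintp (2 * (2 * h)).+1) ^+ 2 = z ^+ (2 * h).
  apply: (mulIf (root1_neq0 _ zn)); rewrite -exprSr zn.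
  transitivity ((evC z (qintp (2 * (2 * h)).+1) * z) ^+ 2); first ring.
  by rewrite evC_qintp (sum_expr_double_root1 zn z_neq1) sqrrN expr1n.
apply: (Phi_dvdp_evC prim_z).
rewrite rmorphB 2!rmorphM !rmorphXn [evC z (_ * _ ^+ 2)]rmorphM !rmorphXn evCX.
by rewrite evC_qbinom_central // -zW; ring.
Qed.

Let evC_pair_neq0 (x : algC) : x ^+ n = 1 -> evC x (qfacN_pair (2 * h)) != 0.
Proof. exact: evC_qfacN_pair_neq0 odd_n. Qed.

Lemma coprimep_den_plus :
  coprimep ('X^(2 * h) * qfacN_pair (2 * h) ^+ 2) (qintp n ^+ 2 * Phi n).
Proof.
apply: coprimep_evC => x /(evC_modulus_root (ltn0Sn _)) xn.
have x_neq0 := root1_neq0 _ xn; have pair_neq0 := evC_pair_neq0 _ xn.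
by rewrite rmorphM !rmorphXn evCX mulf_neq0 ?expf_neq0.
Qed.

Lemma coprimep_den_minus :
  coprimep ('X * qfacN_pair (2 * h) ^+ 2 * qintp (2 * (2 * h)).+1 ^+ 2)
           (qintp n ^+ 2 * Phi n).
Proof.
apply: coprimep_evC => x /(evC_modulus_root (ltn0Sn _)) xn.
have x_neq0 := root1_neq0 _ xn; have pair_neq0 := evC_pair_neq0 _ xn.
have W_neq0 := sum_expr_double_root1_neq0 xn.
by rewrite 2!rmorphM !rmorphXn evCX evC_qintp !mulf_neq0 ?expf_neq0.
Qed.

Lemma qcong_closed_plus :
  qcong ((qpoch qq (qq ^+ 2) n / qpoch (qq ^+ 2) (qq ^+ 2) n * qint (2 * n)%N) ^+ 2
          / qq ^+ (2 * h))
        (qq * qint n ^+ 2) (qintp n ^+ 2 * Phi n).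
Proof.
apply: qcong_frac coprimep_den_plus Phi_dvdp_num_plus (closed_plus_subE _).
by rewrite mulf_neq0 ?expf_neq0 ?polyX_eq0 ?qfacN_pair_neq0.
Qed.

Lemma qcong_closed_minus : (0 < h)%N ->
  qcong (- (qpoch qq (qq ^+ 2) (2 * h) / qpoch (qq ^+ 2) (qq ^+ 2) (2 * h)) ^+ 2
           * qq ^+ (2 * h) / qq)
        (- qint n ^+ 2) (qintp n ^+ 2 * Phi n).
Proof.
move=> h_gt0.
apply: qcong_frac coprimep_den_minus (Phi_dvdp_num_minus h_gt0) (closed_minus_addE _).
rewrite mulf_neq0 ?expf_neq0 ?qintp_neq0 //.
by rewrite mulf_neq0 ?expf_neq0 ?polyX_eq0 ?qfacN_pair_neq0.
Qed.

End OddModulus.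

Theorem theorem1 (n : nat) : odd n -> (1 < n)%N ->
  qcong (\sum_(k < n) qint (4 * k + 1)%N
           * (qpoch qq (qq ^+ 2) k ^+ 2 / qpoch (qq ^+ 2) (qq ^+ 2) k ^+ 2)
           * qq ^ (- (k : int)))
        (qq * qint n ^+ 2) (qintp n ^+ 2 * Phi n)
  /\
  qcong (\sum_(k < n) qint (4 * (k : int) - 1)
           * (qpoch qq^-1 (qq ^+ 2) k ^+ 2 / qpoch (qq ^+ 2) (qq ^+ 2) k ^+ 2)
           * qq ^+ k)
        (- qint n ^+ 2) (qintp n ^+ 2 * Phi n).
Proof.
move=> odd_n lt1n.
have def_n : n = (2 * n./2).+1 by rewrite -[n in LHS]odd_double_half odd_n mul2n.
have h_gt0 : (0 < n./2)%N by rewrite -(ltn_pmul2l (isT : 0 < 2)%N) muln0 -ltnS -def_n.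
rewrite def_n sum_plus_closed sum_minus_closed.
by split; [apply: qcong_closed_plus | apply: qcong_closed_minus].
Qed.
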